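(* Let $G$ be a connected $m$-uniform hypergraph on $n$ vertices with matching number $\mu(G)$, having more than one edge. Then $s(G)\le m^{n-\mu(G)-2}$ and $\gamma(G)\le(n-\mu(G)-2)\mathrm{cl}(m)$.
   Context: A matching is a set of pairwise disjoint edges; $\mu(G)$ is the maximum size of a matching. Adjacency tensor $\mathcal{A}(G)$ (vertices $v_1,\dots,v_n$): $a_{i_1\cdots i_m}=\frac1{(m-1)!}$ if $\{v_{i_1},\dots,v_{i_m}\}$ is an edge, else $0$. For a tensor $\mathcal{A}$: eigenvectors $\mathcal{A}x^{m-1}=\lambda x^{[m-1]}$, $x\ne0$, $(\mathcal{A}x^{m-1})_i=\sum a_{ii_2\cdots i_m}x_{i_2}\cdots x_{i_m}$; $\rho(\mathcal{A})$ spectral radius. Stabilizing index $s(\mathcal{A})$: number of invertible diagonal $D$ with $d_{11}=1$ and $\mathcal{A}=D^{-(m-1)}\mathcal{A}D$, $(D^{-(m-1)}\mathcal{A}D)_{i_1\cdots i_m}=d_{i_1}^{-(m-1)}a_{i_1\cdots i_m}d_{i_2}\cdots d_{i_m}$. Stabilizing dimension $\gamma(\mathcal{A})$: composition length of the $\mathbb{Z}_m$-module of eigenvectors $y$ for $\rho(\mathcal{A})$ normalized by $y_1=1$, with operation $y\circ\hat y=D_yD_{\hat y}v_p$, $D_y=\mathrm{diag}(y_i/|y_i|)$, $v_p$ the positive one. $s(G)=s(\mathcal{A}(G))$, $\gamma(G)=\gamma(\mathcal{A}(G))$. $\mathrm{cl}(m)$: number of prime factors of $m$ with multiplicity. *)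

From HB Require Import structures.
From mathcomp Require Import all_boot all_order all_algebra.
From mathcomp Require Import reals.
From mathcomp.real_closed Require Import complex.
Set Implicit Arguments. Unset Strict Implicit. Unset Printing Implicit Defensive.
Import Order.TTheory GRing.Theory Num.Theory.
Local Open Scope ring_scope.

(* ---------- Hypergraphs on the vertex set 'I_n (v_1 is the vertex 0) ---------- *)

Definition uniform (n m : nat) (E : {set {set 'I_n}}) : bool :=
  [forall e in E, #|e| == m].

Definition hadj (n : nat) (E : {set {set 'I_n}}) : rel 'I_n :=
  fun u v => [exists e in E, (u \in e) && (v \in e)].

Definition hconnected (n : nat) (E : {set {set 'I_n}}) : bool :=
  [forall u, forall v, connect (hadj E) u v].

Definition is_matching (n : nat) (E M : {set {set 'I_n}}) : bool :=
  (M \subset E) &&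
  [forall e1 in M, forall e2 in M, (e1 != e2) ==> [disjoint e1 & e2]].

Definition matching_number (n : nat) (E : {set {set 'I_n}}) : nat :=
  \max_(M : {set {set 'I_n}} | is_matching E M) #|M|.

Definition cl (m : nat) : nat := \sum_(p <- primes m) logn p m.

Definition tensor (K : Type) (m n : nat) := {ffun 'I_m -> 'I_n} -> K.

Definition head_is (m n : nat) (f : {ffun 'I_m -> 'I_n}) (i : 'I_n) : bool :=
  [forall j : 'I_m, (val j == 0%N) ==> (f j == i)].

(* (A x^{m-1})_i = sum_{i_2..i_m} a_{i i_2 .. i_m} x_{i_2} ... x_{i_m} *)
Definition tapply (K : comNzRingType) (m n : nat) (A : tensor K m n)
    (x : {ffun 'I_n -> K}) (i : 'I_n) : K :=
  \sum_(f : {ffun 'I_m -> 'I_n} | head_is f i)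
     A f * \prod_(j : 'I_m | val j != 0%N) x (f j).

Definition adj_tensor (K : fieldType) (n m : nat) (E : {set {set 'I_n}})
    : tensor K m n :=
  fun f => if [set f j | j : 'I_m] \in E then ((m.-1)`!%:R)^-1 else 0.

Section Complex.
Variable R : realType.
Local Notation C := R[i].

Definition is_eigenpair (m n : nat) (A : tensor C m n) (lam : C)
    (x : {ffun 'I_n -> C}) : Prop :=
  x != 0 /\ forall i, tapply A x i = lam * x i ^+ m.-1.

Definition is_eigenvalue (m n : nat) (A : tensor C m n) (lam : C) : Prop :=
  exists x, is_eigenpair A lam x.

Definition spectral_radius (m n : nat) (A : tensor C m n) : R :=
  sup (fun r : R => exists lam, is_eigenvalue A lam /\ `|lam| = Complex r 0).

(* D = diag(d) is invertible, d_11 = 1, and A = D^{-(m-1)} A D, i.e.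
   a_{i_1..i_m} = d_{i_1}^{-(m-1)} a_{i_1..i_m} d_{i_2} ... d_{i_m} *)
Definition stabilizing_diag (m n : nat) (A : tensor C m n)
    (d : {ffun 'I_n -> C}) : Prop :=
  (forall i, d i != 0) /\ (forall i : 'I_n, val i = 0%N -> d i = 1) /\
  forall (i : 'I_n) (f : {ffun 'I_m -> 'I_n}), head_is f i ->
    A f = (d i)^-1 ^+ m.-1 * A f * \prod_(j : 'I_m | val j != 0%N) d (f j).

(* "s(A) <= k": the set of stabilizing diagonal matrices (identified with their
   diagonals) is finite, enumerated without repetition by S, and |S| <= k *)
Definition stab_index_le (m n : nat) (A : tensor C m n) (k : rat) : Prop :=
  exists S : seq {ffun 'I_n -> C},
    [/\ uniq S, (forall d, d \in S <-> stabilizing_diag A d) & (size S)%:R <= k].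

Definition rho_eigvec_normalized (m n : nat) (A : tensor C m n)
    (y : {ffun 'I_n -> C}) : Prop :=
  is_eigenpair A (Complex (spectral_radius A) 0) y /\
  forall i : 'I_n, val i = 0%N -> y i = 1.

Definition is_perron_normalized (m n : nat) (A : tensor C m n)
    (vp : {ffun 'I_n -> C}) : Prop :=
  rho_eigvec_normalized A vp /\ forall i, 0 < vp i.

(* module operation y o y^ = D_y D_y^ v_p, D_y = diag(y_i/|y_i|) *)
Definition mod_op (n : nat) (vp y yh : {ffun 'I_n -> C}) : {ffun 'I_n -> C} :=
  [ffun i => (y i / `|y i|) * (yh i / `|yh i|) * vp i].

(* Z_m-submodules of the module of normalized rho-eigenvectors: subsets
   containing the neutral element v_p and closed under o (closure under the
   Z_m-action k.y = y o ... o y, hence under inverses y^{-1} = (m-1).y,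
   follows) *)
Definition is_submodule (m n : nat) (A : tensor C m n) (vp : {ffun 'I_n -> C})
    (M : {ffun 'I_n -> C} -> Prop) : Prop :=
  [/\ forall y, M y -> rho_eigvec_normalized A y,
      M vp &
      forall y yh, M y -> M yh -> M (mod_op vp y yh)].

(* "gamma(A) <= k": every strictly increasing chain of submodules
   M_0 < M_1 < ... < M_t has length t <= k (composition length <= k) *)
Definition stab_dim_le (m n : nat) (A : tensor C m n) (k : int) : Prop :=
  forall vp, is_perron_normalized A vp ->
  forall (c : nat -> {ffun 'I_n -> C} -> Prop) (t : nat),
    (forall s, (s <= t)%N -> is_submodule A vp (c s)) ->
    (forall s, (s < t)%N ->
       (forall y, c s y -> c s.+1 y) /\ exists y, c s.+1 y /\ ~ c s y) ->
    (t%:Z <= k)%R.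

End Complex.

From HB Require Import structures.
From mathcomp Require Import all_boot all_order all_algebra all_fingroup.
From mathcomp Require Import cyclic separable cyclotomic.
From mathcomp Require Import reals boolp.
From mathcomp.real_closed Require Import complex.
From mathcomp Require Import zify.
Set Implicit Arguments. Unset Strict Implicit. Unset Printing Implicit Defensive.
Import Order.TTheory GRing.Theory Num.Theory.

(* A stabilizing diagonal d of A(G) satisfies d_i^m = 1 and prod_{x in e} d_x = 1
   on every edge e, so writing d_i = w^(c_i) for a primitive m-th root of unity w
   identifies the stabilizing diagonals with the group Q of vectors c in (Z/m)^n
   with c_1 = 0 and zero sum on every edge: s(G) = |Q|.  A maximum matching M and
   an edge f outside it give mu(G) + 2 vertices D (v_1, a vertex of f and one
   vertex in each edge of M) such that the edge equations, solved one at a time,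
   force a vector of Q vanishing off D to vanish.  Hence Q embeds into
   (Z/m)^(n - mu - 2) and |Q| divides m^(n - mu - 2).
   For gamma, a Perron-Frobenius argument shows |y| = v_p for every normalized
   rho-eigenvector y, and then y/|y| is a stabilizing diagonal, so the module of
   these eigenvectors embeds into Q.  Along a strictly increasing chain of
   subgroups the order gains a nontrivial factor at each step, so the chain has
   length at most cl |Q| <= cl (m^(n - mu - 2)) = (n - mu - 2) cl m. *)

(** * Counting prime factors *)

Lemma cl_sum_ord N a : 0 < a -> a < N -> cl a = \sum_(p < N) logn p a.
Proof.
move=> a_gt0 ltaN; rewrite -(big_mkord xpredT (logn^~ a)).
rewrite (bigID (mem (primes a))) /= [X in _ + X]big1 ?addn0; last first.
  by move=> p /negbTE; rewrite -logn_gt0 lt0n => /negbFE/eqP.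
rewrite -big_filter /cl; apply/perm_big/uniq_perm.
- exact: primes_uniq.
- exact: filter_uniq (iota_uniq _ _).
- move=> p; rewrite mem_filter mem_iota /= add0n subn0 andb_idr //.
  by rewrite mem_primes => /and3P[_ _ /(dvdn_leq a_gt0) /leq_ltn_trans]; apply.
Qed.

Lemma clM a b : 0 < a -> 0 < b -> cl (a * b) = cl a + cl b.
Proof.
move=> a_gt0 b_gt0; have ab_gt0 : 0 < a * b by rewrite muln_gt0 a_gt0.
rewrite !(@cl_sum_ord (a * b).+1) ?ltnS ?leq_pmull ?leq_pmulr //.
by rewrite -big_split; apply: eq_bigr => p _; rewrite lognM.
Qed.

Lemma clX a k : 0 < a -> cl (a ^ k) = k * cl a.
Proof.
move=> a_gt0; elim: k => [|k IHk]; first by rewrite /cl big_nil.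
by rewrite expnS clM ?expn_gt0 ?a_gt0 // IHk mulSn.
Qed.

Lemma cl_gt0 a : 1 < a -> 0 < cl a.
Proof.
move=> a_gt1; have a_gt0 := ltnW a_gt1.
have lt_pa : pdiv a < a.+1 by rewrite ltnS dvdn_leq ?pdiv_dvd.
rewrite (@cl_sum_ord a.+1) // (bigD1 (Ordinal lt_pa)) //= addn_gt0 logn_gt0.
by rewrite mem_primes pdiv_prime ?a_gt0 ?pdiv_dvd.
Qed.

Lemma dvdn_leq_cl a b : a %| b -> 0 < b -> cl a <= cl b.
Proof.
by case/dvdnP=> k ->; rewrite muln_gt0 => /andP[k_gt0 a_gt0]; rewrite clM ?leq_addl.
Qed.

Lemma dvdn_ltn_cl a b : a %| b -> 0 < a -> a < b -> cl a < cl b.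
Proof.
case/dvdnP=> k -> a_gt0; rewrite -[X in X < _]mul1n ltn_pmul2r //.
by move=> k_gt1; rewrite clM ?(ltnW k_gt1) // -[X in X < _]add0n ltn_add2r cl_gt0.
Qed.

Lemma proper_chain_leq_cl (gT : finGroupType) (G : {group gT})
    (H : nat -> {set gT}) t :
  (forall s, s <= t -> group_set (H s)) -> H t \subset G ->
  (forall s, s < t -> H s \proper H s.+1) -> t <= cl #|G|.
Proof.
move=> grH sHtG ltH.
have card_gt0 s : s <= t -> 0 < #|H s|.
  by move=> le_st; apply/card_gt0P; exists 1%g; case/group_setP: (grH s le_st).
suff le_cl s : s <= t -> s <= cl #|H s|.
  apply: leq_trans (le_cl t (leqnn t)) (dvdn_leq_cl _ (cardG_gt0 G)).
  exact: (cardSg (G := G) (H := Group (grH t (leqnn t)))).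
elim: s => // s IHs lt_st.
apply: leq_ltn_trans (IHs (ltnW lt_st)) (dvdn_ltn_cl _ (card_gt0 s (ltnW lt_st)) _).
- exact: (cardSg (G := Group (grH _ lt_st)) (H := Group (grH _ (ltnW lt_st))))
    (proper_sub (ltH s lt_st)).
- exact: proper_card (ltH s lt_st).
Qed.

(** * Uniform hypergraphs and matchings *)

Section Hypergraph.
Variables (n m : nat) (E : {set {set 'I_n}}).
Hypothesis E_uniform : uniform m E.

Lemma card_edge e : e \in E -> #|e| = m.
Proof. by move=> eE; apply/eqP; move/forall_inP: E_uniform; apply. Qed.

Lemma edge_not_subset e e' : e \in E -> e' \in E -> e != e' -> ~~ (e \subset e').
Proof. by move=> eE e'E; apply: contra => sub; rewrite eqEcard sub !card_edge ?leqnn. Qed.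

Lemma edge_enum_from e i : e \in E -> i \in e ->
  exists f : {ffun 'I_m -> 'I_n}, head_is f i /\ [set f j | j : 'I_m] = e.
Proof.
move=> eE ie; pose s := i :: enum (e :\ i).
have size_s : size s = m by rewrite /= -cardE -(card_edge eE) (cardsD1 i e) ie.
have mem_s x : (x \in s) = (x \in e).
  by rewrite inE mem_enum in_setD1; case: eqVneq => [->|].
exists [ffun j : 'I_m => nth i s j]; split.
  by apply/forallP=> j; apply/implyP=> /eqP j0; rewrite ffunE j0.
apply/setP=> x; apply/imsetP/idP => [[j _ ->]|xe].
  by rewrite ffunE -mem_s mem_nth // size_s.
have lt_xm : index x s < m by rewrite -size_s index_mem mem_s.
by exists (Ordinal lt_xm); rewrite // ffunE nth_index ?mem_s.
Qed.

Lemma edge_enum_inj (f : {ffun 'I_m -> 'I_n}) :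
  [set f j | j : 'I_m] \in E -> injective f.
Proof.
move=> fE j j'; have /imset_injP inj_f : #|[set f j | j : 'I_m]| == #|'I_m|.
  by rewrite card_edge // card_ord.
exact: inj_f.
Qed.

Lemma exists_other_vertex e w : 1 < m -> e \in E -> exists2 x, x \in e & x != w.
Proof.
move=> m_gt1 eE; have /card_gt1P[x [y [xe ye ne_xy]]] : 1 < #|e| by rewrite card_edge.
by case: (eqVneq x w) => [xw | ]; [exists y; rewrite // -xw eq_sym | exists x].
Qed.

Section Connected.
Hypothesis E_connected : hconnected E.

Lemma hconnected_ind (P : pred 'I_n) :
  (forall u v, hadj E u v -> P u -> P v) -> forall u v, P u -> P v.
Proof.
move=> PE u v; move/forallP: E_connected => /(_ u)/forallP/(_ v)/connectP[p].
elim: p u => [|w p IHp] u /= => [_ -> // | /andP[uw wp] v_last Pu].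
exact: IHp wp v_last (PE _ _ uw Pu).
Qed.

Lemma exists_meeting_edges : 0 < m -> 1 < #|E| ->
  exists e1 e2, [/\ e1 \in E, e2 \in E, e1 != e2 & ~~ [disjoint e1 & e2]].
Proof.
move=> m_gt0 /card_gt1P[e1 [e2 [e1E e2E ne12]]].
case: (boolP [exists e in E, exists e' in E, (e != e') && ~~ [disjoint e & e']]).
  by case/exists_inP=> e eE /exists_inP[e' e'E /andP[nee' meet]]; exists e, e'.
move=> no_meet; exfalso.
have disj e e' : e \in E -> e' \in E -> e != e' -> [disjoint e & e'].
  move=> eE e'E nee'; apply: contraNT no_meet => meet.
  by apply/exists_inP; exists e => //; apply/exists_inP; exists e'; rewrite ?nee'.
have [a ae1] : exists a, a \in e1 by apply/card_gt0P; rewrite card_edge.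
have [b be2] : exists b, b \in e2 by apply/card_gt0P; rewrite card_edge.
have : b \in e1.
  apply: (@hconnected_ind [pred x | x \in e1] _ a b ae1) => x y.
  case/exists_inP=> e eE /andP[xe ye] /= xe1.
  case: (eqVneq e e1) => [<- // | nee1].
  by rewrite (disjointFr (disj _ _ eE e1E nee1) xe) in xe1.
by move=> be1; rewrite (disjointFr (disj _ _ e1E e2E ne12) be1) in be2.
Qed.

Lemma uniform_gt1 : 1 < #|E| -> 1 < m.
Proof.
move=> E_gt1; have m_gt0 : 0 < m.
  case/card_gt1P: E_gt1 => e1 [e2 [e1E e2E]]; apply: contraNT; rewrite lt0n negbK.
  move/eqP=> m0; have empty_edge e : e \in E -> e = set0.
    by move=> eE; apply: cards0_eq; rewrite card_edge.
  by rewrite (empty_edge e1) // (empty_edge e2).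
have [e1 [e2 [e1E e2E ne12 /pred0Pn[x /andP[xe1 xe2]]]]] :=
  exists_meeting_edges m_gt0 E_gt1.
rewrite ltnNge; apply: contra ne12 => le_m1.
have edge_1 e : e \in E -> x \in e -> e = [set x].
  by move=> eE xe; apply/eqP; rewrite eq_sym eqEcard sub1set xe cards1 card_edge.
by rewrite (edge_1 e1) // (edge_1 e2).
Qed.

End Connected.

Section Matching.
Variable M0 : {set {set 'I_n}}.
Hypothesis M0_matching : is_matching E M0.

Lemma matching_edge e : e \in M0 -> e \in E.
Proof. by case/andP: M0_matching => /subsetP sub _ /sub. Qed.

Lemma matching_eq_edge e1 e2 x : e1 \in M0 -> e2 \in M0 ->
  x \in e1 -> x \in e2 -> e1 = e2.
Proof.
move=> e1M e2M xe1 xe2; apply/eqP; apply: contraT => ne12.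
case/andP: M0_matching => _ /forall_inP/(_ e1 e1M)/forall_inP/(_ e2 e2M).
by rewrite ne12 => /disjointFr/(_ xe1); rewrite xe2.
Qed.

Lemma exists_edge_notin_matching : hconnected E -> 0 < m -> 1 < #|E| ->
  exists2 f, f \in E & f \notin M0.
Proof.
move=> E_connected m_gt0 E_gt1.
have [e1 [e2 [e1E e2E ne12 meet]]] := exists_meeting_edges E_connected m_gt0 E_gt1.
case: (boolP (e1 \in M0)) => [e1M|]; last by exists e1.
case: (boolP (e2 \in M0)) => [e2M|]; last by exists e2.
have [x] := pred0Pn meet; rewrite inE => /andP[xe1 xe2].
by rewrite (matching_eq_edge e1M e2M xe1 xe2) eqxx in ne12.
Qed.

End Matching.

Lemma exists_maximum_matching :
  exists2 M0, is_matching E M0 & #|M0| = matching_number E.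
Proof.
have [|M0 M0_matching max_M0] :=
  @eq_bigmax_cond _ [pred M | is_matching E M] (fun M => #|M|).
  apply/card_gt0P; exists set0; rewrite inE /is_matching sub0set.
  by apply/forall_inP => e; rewrite inE.
by exists M0; [rewrite inE in M0_matching | exact: esym max_M0].
Qed.

End Hypergraph.

Local Open Scope ring_scope.

(** * Balanced vectors and rigid vertex sets *)

Section Balanced.
Variables (n : nat) (E : {set {set 'I_n}}) (V : nmodType) (v0 : 'I_n).

Definition balanced (c : 'I_n -> V) : bool :=
  (c v0 == 0) && [forall e in E, \sum_(x in e) c x == 0].

Definition rigid (D : {set 'I_n}) : Prop :=
  forall c, balanced c -> (forall i, i \notin D -> c i = 0) -> forall i, c i = 0.

Lemma balanced_edge_eq0 c e x : balanced c -> e \in E -> x \in e ->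
  (forall y, y \in e -> y != x -> c y = 0) -> c x = 0.
Proof.
case/andP=> _ /forall_inP sum_eq0 eE xe eq0; move/eqP: (sum_eq0 e eE).
by rewrite (bigD1 x) //= big1 ?addr0 // => y /andP[]; apply: eq0.
Qed.

Section Transversal.
Variables (M0 : {set {set 'I_n}}) (f : {set 'I_n}) (u : 'I_n).
Variable v : {set 'I_n} -> 'I_n.
Hypotheses (M0_matching : is_matching E M0) (fE : f \in E) (uf : u \in f).
Hypothesis u_neq_v0 : u != v0.
(* Matching edges are disjoint, so each one meets D only in v0, u and its own
   representative, which its equation determines once c u is known or u is not
   in it; the equation of f determines c u when the representatives lying in f
   come from edges avoiding u. *)
Hypothesis v_rep : forall e, e \in M0 ->
  [/\ v e \in e, v e != v0, v e != u & v e \in f -> u \notin e].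

Let D := v0 |: (u |: [set v e | e in M0]).

Lemma card_transversal : #|D| = (#|M0|).+2.
Proof.
have v_inj : {in M0 &, injective v}.
  move=> e e' eM e'M ve_e'; have [ve _ _ _] := v_rep eM; have [ve' _ _ _] := v_rep e'M.
  by apply: (matching_eq_edge M0_matching eM e'M ve); rewrite ve_e'.
have v0_notin : v0 \notin [set v e | e in M0].
  by apply/imsetP=> -[e eM v0e]; have [_ + _ _] := v_rep eM; rewrite -v0e eqxx.
have u_notin : u \notin [set v e | e in M0].
  by apply/imsetP=> -[e eM ue]; have [_ _ + _] := v_rep eM; rewrite -ue eqxx.
rewrite cardsU1 in_setU1 negb_or eq_sym u_neq_v0 v0_notin.
by rewrite cardsU1 u_notin card_in_imset.
Qed.

Lemma mem_transversal_edge e y : e \in M0 -> y \in e -> y \in D ->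
  [|| y == v0, y == u | y == v e].
Proof.
move=> eM ye; rewrite !in_setU1 => /or3P[-> | -> | /imsetP[e' e'M ye']]; rewrite ?orbT //.
have [ve' _ _ _] := v_rep e'M; rewrite ye' in ye *.
by rewrite (matching_eq_edge M0_matching e'M eM ve' ye) eqxx !orbT.
Qed.

Lemma transversal_rigid : rigid D.
Proof.
move=> c bal_c c_out.
have c_v0 : c v0 = 0 by case/andP: bal_c => /eqP.
have c_D y : y \notin D -> c y = 0 by apply: c_out.
have c_rep e : e \in M0 -> (u \in e -> c u = 0) -> c (v e) = 0.
  move=> eM c_u; have [ve _ _ _] := v_rep eM.
  apply: (balanced_edge_eq0 bal_c (matching_edge M0_matching eM) ve) => y ye ne_yv.
  have [yD | /c_D //] := boolP (y \in D).
  case/or3P: (mem_transversal_edge eM ye yD) => /eqP y_eq; first by rewrite y_eq.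
    by rewrite y_eq c_u // -y_eq.
  by rewrite y_eq eqxx in ne_yv.
have c_u : c u = 0.
  apply: (balanced_edge_eq0 bal_c fE uf) => y yf ne_yu.
  have [| /c_D //] := boolP (y \in D); rewrite !in_setU1 (negbTE ne_yu) /=.
  case/orP=> [/eqP-> // | /imsetP[e eM ye]]; have [_ _ _ vf_u] := v_rep eM.
  by rewrite ye; apply: c_rep => // ue; rewrite -ye yf ue in vf_u; have := vf_u isT.
move=> i; have [| /c_D //] := boolP (i \in D); rewrite !in_setU1.
by case/or3P=> [/eqP-> | /eqP-> | /imsetP[e eM ->]]; rewrite ?c_v0 ?c_u ?c_rep.
Qed.

End Transversal.

Section RigidSet.
Variables (m : nat) (M0 : {set {set 'I_n}}) (f : {set 'I_n}).
Hypotheses (E_uniform : uniform m E) (m_gt1 : (1 < m)%N).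
Hypotheses (M0_matching : is_matching E M0) (fE : f \in E) (fNM0 : f \notin M0).

Lemma mem_v0_matching_edge e : e \in M0 -> e \subset v0 |: f -> v0 \in e.
Proof.
move=> eM sub; have eE := matching_edge M0_matching eM.
have ne_ef : e != f by apply: contraNneq fNM0 => <-.
have [x xe xNf] := subsetPn (edge_not_subset E_uniform eE fE ne_ef).
by move/subsetP/(_ x xe): sub; rewrite in_setU1 (negbTE xNf) orbF => /eqP <-.
Qed.

Lemma exists_anchor : exists u,
  [/\ u \in f, u != v0 & forall e, e \in M0 -> e \subset v0 |: f -> u \notin e].
Proof.
have [/exists_inP[e1 e1M sub1] | none] := boolP [exists e in M0, e \subset v0 |: f].
  have ne_fe1 : f != e1 by apply: contraNneq fNM0 => ->.
  have e1E := matching_edge M0_matching e1M.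
  have [u uf uNe1] := subsetPn (edge_not_subset E_uniform fE e1E ne_fe1).
  have v0e1 := mem_v0_matching_edge e1M sub1.
  exists u; split=> //; first by apply: contraNneq uNe1 => ->.
  move=> e eM sub; apply: contraNN uNe1 => ue.
  by rewrite -(matching_eq_edge M0_matching eM e1M (mem_v0_matching_edge eM sub) v0e1).
have [u uf ne_uv0] := exists_other_vertex E_uniform v0 m_gt1 fE.
by exists u; split=> // e eM sub; case/exists_inP: none; exists e.
Qed.

Lemma exists_representative u e : u \in f ->
    (forall e', e' \in M0 -> e' \subset v0 |: f -> u \notin e') -> e \in M0 ->
  exists x, [/\ x \in e, x != v0, x != u & x \in f -> u \notin e].
Proof.
move=> uf u_out eM; have eE := matching_edge M0_matching eM.
have [sub | /subsetPn[x xe]] := boolP (e \subset v0 |: f).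
  have uNe := u_out e eM sub.
  have [x xe ne_xv0] := exists_other_vertex E_uniform v0 m_gt1 eE.
  by exists x; split=> //; apply: contraNneq uNe => <-.
rewrite in_setU1 negb_or => /andP[ne_xv0 xNf].
by exists x; split=> //; [apply: contraNneq xNf => -> | rewrite (negbTE xNf)].
Qed.

Lemma exists_rigid_set : exists2 D : {set 'I_n}, #|D| = (#|M0|).+2 & rigid D.
Proof.
have [u [uf ne_uv0 u_out]] := exists_anchor.
have [v v_rep] : exists v : {set 'I_n} -> 'I_n, forall e, e \in M0 ->
    [/\ v e \in e, v e != v0, v e != u & v e \in f -> u \notin e].
  apply: (@fin_all_exists _ (fun=> 'I_n) (fun e x => e \in M0 ->
    [/\ x \in e, x != v0, x != u & x \in f -> u \notin e])) => e.
  have [eM | _] := boolP (e \in M0); last by exists v0.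
  by have [x x_rep] := exists_representative uf u_out eM; exists x.
exists (v0 |: (u |: [set v e | e in M0])).
  exact: card_transversal M0_matching ne_uv0 v_rep.
exact: transversal_rigid M0_matching fE uf v_rep.
Qed.

End RigidSet.
End Balanced.

(* Row vectors rather than finfuns: 'rV[V]_n is a finGroupType. *)
Section BalancedRows.
Variables (n : nat) (E : {set {set 'I_n}}) (V : finZmodType) (v0 : 'I_n).

Definition balanced_rows : {set 'rV[V]_n} := [set c : 'rV_n | balanced E v0 (c 0)].

Lemma balanced_rows_group_set : group_set balanced_rows.
Proof.
apply/group_setP; split.
  rewrite inE /balanced mxE eqxx; apply/forall_inP=> e _.
  by rewrite big1 // => x _; rewrite mxE.
move=> a b; rewrite !inE /balanced.
move=> /andP[/eqP a_v0 /forall_inP a_E] /andP[/eqP b_v0 /forall_inP b_E].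
rewrite (_ : (a * b)%g = a + b) // mxE a_v0 b_v0 addr0 eqxx; apply/forall_inP=> e eE.
rewrite (eq_bigr (fun x => a 0 x + b 0 x)) => [|x _]; last by rewrite mxE.
by rewrite big_split /= (eqP (a_E e eE)) (eqP (b_E e eE)) addr0.
Qed.

Canonical balanced_rows_group := Group balanced_rows_group_set.

Lemma card_balanced_rows_dvdn D :
  rigid E V v0 D -> (#|balanced_rows| %| #|V| ^ (n - #|D|))%N.
Proof.
move=> D_rigid; set Q := balanced_rows; set k := #|~: D|.
pose pi (c : 'rV[V]_n) : 'rV[V]_k := \row_j c 0 (enum_val j).
have piD a b : pi (a + b) = pi a + pi b by apply/rowP=> j; rewrite !mxE.
have pi_inj : {in Q &, injective pi}.
  move=> a b aQ bQ eq_pi; apply/eqP; rewrite -subr_eq0; apply/eqP/rowP=> i.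
  have abQ : a - b \in Q := groupM aQ (groupVr bQ).
  rewrite [RHS]mxE; move: abQ; rewrite inE => /D_rigid-> // {}i iND.
  have iD : i \in ~: D by rewrite inE.
  have := congr1 (fun r : 'rV_k => r 0 (enum_rank_in iD i)) eq_pi.
  by rewrite !mxE enum_rankK_in // => ->; rewrite subrr.
have piQ_group : group_set (pi @: Q).
  apply/group_setP; split.
    by apply/imsetP; exists 1%g => //; apply/rowP=> j; rewrite !mxE.
  move=> _ _ /imsetP[a aQ ->] /imsetP[b bQ ->]; apply/imsetP.
  by exists (a * b)%g; [exact: groupM | exact: esym (piD a b)].
have -> : (n - #|D|)%N = k by have := cardsC D; rewrite card_ord /k; lia.
have -> : (#|V| ^ k)%N = #|[set: 'rV[V]_k]| by rewrite cardsT card_mx mul1n.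
rewrite -(card_in_imset pi_inj).
exact: (cardSg (G := [group of [set: 'rV[V]_k]]) (H := Group piQ_group) (subsetT _)).
Qed.

End BalancedRows.

Arguments balanced_rows {n} E {V} v0.

(** * Stabilizing diagonal matrices *)

Lemma prim_root_exists (F : numClosedFieldType) k :
  (0 < k)%N -> {w : F | k.-primitive_root w}.
Proof.
move=> k_gt0; have [r Xk1] := closed_field_poly_normal ('X^k - 1 : {poly F}).
rewrite (monicP (monicXnsubC 1 k_gt0)) scale1r in Xk1.
have r_unity : all k.-unity_root r.
  by apply/allP=> z; rewrite -root_prod_XsubC -Xk1.
have r_uniq : uniq r.
  by rewrite -separable_prod_XsubC -Xk1 separable_Xn_sub_1 // pnatr_eq0 -lt0n.
have r_size : (k <= size r)%N.
  by rewrite -ltnS -(size_prod_XsubC r id) -Xk1 size_XnsubC.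
apply/sigW; have /hasP[w _ w_prim] := has_prim_root k_gt0 r_unity r_uniq r_size.
by exists w.
Qed.

Lemma eq_conj_scale (F : fieldType) (a x p : F) k : a != 0 -> x != 0 ->
  (a = x^-1 ^+ k * a * p) <-> (p = x ^+ k).
Proof.
move=> a_neq0 x_neq0; rewrite -mulrA -{1}[a]mulr1 mulrCA.
split=> [/(mulfI a_neq0) xp | ->]; last by rewrite -exprMn mulVf ?expr1n.
by rewrite -[x ^+ k]mulr1 xp mulrA -exprMn mulfV ?expr1n ?mul1r.
Qed.

Section Stabilizing.
Variables (R : realType) (n M : nat) (E : {set {set 'I_n}}) (v0 : 'I_n).
Local Notation C := R[i].
Local Notation m := M.+1.
Local Notation A := (@adj_tensor C n m E).
Hypotheses (E_uniform : uniform m E) (v0_first : val v0 = 0%N).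

Lemma head_isE (f : {ffun 'I_m -> 'I_n}) i : head_is f i = (f ord0 == i).
Proof.
apply/forallP/eqP => [/(_ ord0)/implyP/(_ isT)/eqP // | f0 j].
by apply/implyP=> /eqP j0; rewrite (_ : j = ord0) ?f0 //; apply: val_inj.
Qed.

Lemma adj_tensor_edge (f : {ffun 'I_m -> 'I_n}) :
  [set f j | j : 'I_m] \in E -> A f = (M`!%:R)^-1.
Proof. by rewrite /adj_tensor => ->. Qed.

Lemma prod_edge_enum (d : 'I_n -> C) (f : {ffun 'I_m -> 'I_n}) :
    [set f j | j : 'I_m] \in E ->
  \prod_(j : 'I_m | val j != 0%N) d (f j) * d (f ord0) =
  \prod_(x in [set f j | j : 'I_m]) d x.
Proof.
move=> fE; rewrite big_imset /=; last exact: in2W (edge_enum_inj E_uniform fE).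
by rewrite [RHS](bigD1 ord0) // mulrC.
Qed.

Lemma stabilizing_diagP (d : {ffun 'I_n -> C}) :
  stabilizing_diag A d <->
  [/\ forall i, d i != 0, d v0 = 1 &
      forall e i, e \in E -> i \in e -> d i ^+ m = \prod_(x in e) d x].
Proof.
have fact_neq0 : (M`!%:R : C)^-1 != 0 by rewrite invr_eq0 pnatr_eq0 -lt0n fact_gt0.
split=> [[d_neq0 [d_v0 d_stab]] | [d_neq0 d_v0 d_edge]].
  split=> // [|e i eE ie]; first exact: d_v0.
  have [f [fi fe]] := edge_enum_from E_uniform eE ie.
  move: (d_stab i f fi); rewrite adj_tensor_edge ?fe //.
  move/(eq_conj_scale _ _ fact_neq0 (d_neq0 i)) => d_prod.
  move: fi; rewrite head_isE => /eqP fi.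
  by rewrite -fe -prod_edge_enum ?fe // d_prod -fi exprSr.
split=> //; split=> [i i0 | i f].
  by rewrite (_ : i = v0) //; apply: val_inj; rewrite /= i0.
rewrite head_isE => /eqP fi; rewrite /adj_tensor.
case: ifP => fE; last by rewrite mulr0 mul0r.
apply/(eq_conj_scale _ _ fact_neq0 (d_neq0 i)); apply: (mulIf (d_neq0 i)).
by rewrite -exprSr -fi prod_edge_enum // -(d_edge _ (f ord0) fE) ?imset_f.
Qed.

Hypothesis E_connected : hconnected E.

Lemma stabilizing_diag_exp (d : {ffun 'I_n -> C}) :
  stabilizing_diag A d -> forall i, d i ^+ m = 1.
Proof.
case/stabilizing_diagP=> _ d_v0 d_edge i; apply/eqP.
apply: (@hconnected_ind _ _ E_connected [pred i | d i ^+ m == 1] _ v0 i).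
  move=> u w /exists_inP[e eE /andP[ue we]].
  by rewrite /= (d_edge _ _ eE ue) (d_edge _ _ eE we).
by rewrite /= d_v0 expr1n.
Qed.

Lemma stabilizing_diag_edge (d : {ffun 'I_n -> C}) e :
  stabilizing_diag A d -> e \in E -> \prod_(x in e) d x = 1.
Proof.
move=> d_stab eE; have [i ie] : exists i, i \in e.
  by apply/card_gt0P; rewrite (card_edge E_uniform eE).
by case/stabilizing_diagP: (d_stab) => _ _ /(_ e i eE ie) <-; rewrite stabilizing_diag_exp.
Qed.

End Stabilizing.

Section RowCodes.
Variables (R : realType) (n M : nat) (E : {set {set 'I_n}}) (v0 : 'I_n) (w : R[i]).
Local Notation C := R[i].
Local Notation m := M.+2.
Local Notation A := (@adj_tensor C n m E).
Local Notation Q := (@balanced_rows n E 'Z_m v0).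
Hypotheses (E_uniform : uniform m E) (E_connected : hconnected E).
Hypotheses (v0_first : val v0 = 0%N) (w_prim : m.-primitive_root w).

Definition zroot (a : 'Z_m) : C := w ^+ a.

Lemma zrootD a b : zroot (a + b) = zroot a * zroot b.
Proof. by rewrite /zroot -exprD -[in RHS](prim_expr_mod w_prim). Qed.

Lemma zroot0 : zroot 0 = 1.
Proof. exact: expr0. Qed.

Lemma zroot_inj : injective zroot.
Proof.
move=> a b /eqP; rewrite /zroot (eq_prim_root_expr w_prim) !modn_small ?ltn_ord //.
by move/eqP/val_inj.
Qed.

Lemma zroot_eq1 a : (zroot a == 1) = (a == 0).
Proof. by rewrite -zroot0 (inj_eq zroot_inj). Qed.

Lemma zroot_sum (I : finType) (P : pred I) (c : I -> 'Z_m) :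
  zroot (\sum_(i | P i) c i) = \prod_(i | P i) zroot (c i).
Proof. exact: (big_morph zroot zrootD zroot0). Qed.

Lemma zroot_exp a : zroot a ^+ m = 1.
Proof. by rewrite /zroot exprAC (prim_expr_order w_prim) expr1n. Qed.

Lemma zroot_neq0 a : zroot a != 0.
Proof. by apply: contra_eq_neq (zroot_exp a) => ->; rewrite expr0n eq_sym oner_eq0. Qed.

Lemma normr_zroot a : `|zroot a| = 1.
Proof. by apply/eqP; rewrite -(@pexpr_eq1 _ _ m) // -normrX zroot_exp normr1. Qed.

Definition diag_of_row (c : 'rV['Z_m]_n) : {ffun 'I_n -> C} := [ffun i => zroot (c 0 i)].

Lemma diag_of_row_inj : injective diag_of_row.
Proof.
move=> c c' /ffunP eq_cc'; apply/rowP=> i; apply: zroot_inj.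
by have := eq_cc' i; rewrite !ffunE.
Qed.

Lemma stabilizing_diag_of_row c :
  stabilizing_diag A (diag_of_row c) <-> c \in Q.
Proof.
rewrite inE /balanced; split=> [c_stab | /andP[/eqP c_v0 /forall_inP c_E]].
  have [_ d_v0 _] := (stabilizing_diagP E_uniform v0_first _).1 c_stab.
  rewrite ffunE in d_v0; rewrite -zroot_eq1 d_v0 eqxx; apply/forall_inP=> e eE.
  rewrite -zroot_eq1 zroot_sum (eq_bigr (diag_of_row c)) => [|x _]; last by rewrite ffunE.
  by rewrite (stabilizing_diag_edge E_uniform v0_first E_connected c_stab eE).
apply/(stabilizing_diagP E_uniform v0_first).
split=> [i | | e i eE _]; rewrite ?ffunE ?zroot_neq0 //; first by rewrite c_v0 zroot0.
rewrite zroot_exp (eq_bigr (zroot \o c 0)) => [|x _]; last by rewrite ffunE.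
by rewrite -zroot_sum (eqP (c_E e eE)) zroot0.
Qed.

Lemma stabilizing_diag_row d :
  stabilizing_diag A d -> exists2 c, c \in Q & d = diag_of_row c.
Proof.
move=> d_stab; have d_exp := stabilizing_diag_exp E_uniform v0_first E_connected d_stab.
pose c := \row_i (sval (prim_rootP w_prim (d_exp i)) : 'Z_m).
suff d_c : d = diag_of_row c by exists c => //; rewrite -stabilizing_diag_of_row -d_c.
apply/ffunP=> i; rewrite !ffunE mxE /zroot.
by case: (prim_rootP w_prim (d_exp i)).
Qed.

End RowCodes.

Section StabilizingIndex.
Variables (R : realType) (n M : nat) (E : {set {set 'I_n}}) (v0 : 'I_n).
Local Notation m := M.+2.
Local Notation A := (@adj_tensor R[i] n m E).
Local Notation Q := (@balanced_rows n E 'Z_m v0).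
Hypotheses (E_uniform : uniform m E) (E_connected : hconnected E).
Hypothesis v0_first : val v0 = 0%N.

Lemma stab_index_le_balanced (k : rat) :
  (#|Q|%:R <= k) -> stab_index_le A k.
Proof.
move=> le_Qk; have [w w_prim] := prim_root_exists R[i] (ltn0Sn M.+1).
have row_stab := stabilizing_diag_of_row E_uniform E_connected v0_first w_prim.
have stab_row := stabilizing_diag_row E_uniform E_connected v0_first w_prim.
exists (map (diag_of_row w) (enum Q)); split.
- by rewrite map_inj_uniq ?enum_uniq //; exact: diag_of_row_inj.
- move=> d; split=> [/mapP[c] | /stab_row[c cQ ->]]; last by rewrite map_f ?mem_enum.
  by rewrite mem_enum -row_stab => c_stab ->.
- by rewrite size_map -cardE.
Qed.

End StabilizingIndex.

(** * Perron vectors and normalized eigenvectors *)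

Lemma prodr_le_eq (F : numDomainType) (I : finType) (P : pred I) (a b : I -> F) :
    (forall j, P j -> 0 <= a j <= b j) -> (forall j, P j -> 0 < b j) ->
  \prod_(j | P j) a j = \prod_(j | P j) b j -> forall j, P j -> a j = b j.
Proof.
move=> le_ab b_gt0 eq_prod j Pj; apply/eqP; apply: contraT => ne_ab.
have /andP[a_ge0 le_ab_j] := le_ab j Pj.
have lt_ab : a j < b j by rewrite lt_def eq_sym ne_ab.
move/eqP: eq_prod; rewrite (bigD1 j Pj) [X in _ == X](bigD1 j Pj) /= lt_eqF //.
set pa := \prod_(i | _) a i; set pb := \prod_(i | _) b i.
have le_pab : pa <= pb by apply: ler_prod => i /andP[Pi _]; apply: le_ab.
have pb_gt0 : 0 < pb by apply: prodr_gt0 => i /andP[Pi _]; apply: b_gt0.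
by apply: le_lt_trans (ler_wpM2l a_ge0 le_pab) _; rewrite ltr_pM2r.
Qed.

Lemma prodr_tail_const (K : pzSemiRingType) M (c : K) :
  \prod_(j < M.+1 | val j != 0%N) c = c ^+ M.
Proof.
rewrite big_mkcond big_ord_recl /= mul1r -(big_mkord xpredT (fun=> c)).
by rewrite prodr_const_nat subn0.
Qed.

Definition tmonomial (K : comNzRingType) (m n : nat) (x : {ffun 'I_n -> K})
    (f : {ffun 'I_m -> 'I_n}) : K :=
  \prod_(j : 'I_m | val j != 0%N) x (f j).

Section Perron.
Variables (R : realType) (n M : nat) (E : {set {set 'I_n}}) (v0 : 'I_n).
Local Notation C := R[i].
Local Notation m := M.+1.
Local Notation A := (@adj_tensor C n m E).
Local Notation rho := (Complex (spectral_radius A) 0).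
Hypotheses (E_uniform : uniform m E) (E_connected : hconnected E).
Hypotheses (v0_first : val v0 = 0%N) (E_neq0 : (0 < #|E|)%N).
Variable vp : {ffun 'I_n -> C}.
Hypothesis vp_perron : is_perron_normalized A vp.

Lemma tapplyE x i : tapply A x i = \sum_(f | head_is f i) A f * tmonomial x f.
Proof. by []. Qed.

Lemma adj_tensor_ge0 f : 0 <= A f.
Proof. by rewrite /adj_tensor; case: ifP; rewrite // invr_ge0 ler0n. Qed.

Lemma perron_gt0 i : 0 < vp i.
Proof. by case: vp_perron => _; apply. Qed.

Lemma perron_eigen i : tapply A vp i = rho * vp i ^+ M.
Proof. by case: vp_perron => -[[_ ->]]. Qed.

Lemma tmonomial_perron_gt0 (f : {ffun 'I_m -> 'I_n}) : 0 < tmonomial vp f.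

Proof. by apply: prodr_gt0 => j _; apply: perron_gt0. Qed.

Lemma rho_gt0 : 0 < rho.
Proof.
have [e eE] : exists e, e \in E by apply/card_gt0P.
have [i ie] : exists i, i \in e by apply/card_gt0P; rewrite (card_edge E_uniform eE).
have [f [fi fe]] := edge_enum_from E_uniform eE ie.
have : 0 < tapply A vp i.
  rewrite tapplyE (bigD1 f fi) /= ltr_wpDr ?sumr_ge0 // => [g _|].
    by rewrite mulr_ge0 ?adj_tensor_ge0 ?ltW ?tmonomial_perron_gt0.
  rewrite adj_tensor_edge ?fe // mulr_gt0 ?tmonomial_perron_gt0 //.
  by rewrite invr_gt0 ltr0n fact_gt0.
by rewrite perron_eigen pmulr_lgt0 // exprn_gt0 ?perron_gt0.
Qed.

Section Subeigenvector.
Variable z : {ffun 'I_n -> C}.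
Hypotheses (z_ge0 : forall i, 0 <= z i) (z_sub : forall i, rho * z i ^+ M <= tapply A z i).

(* At a vertex u where z reaches c vp, rho z_u^(m-1) <= (A z^(m-1))_u
   <= (A (c vp)^(m-1))_u = rho z_u^(m-1) forces equality term by term. *)
Lemma subeigen_edge_eq c u : 0 < c -> (forall i, z i <= c * vp i) -> z u = c * vp u ->
  forall f, head_is f u -> [set f j | j : 'I_m] \in E ->
  forall j : 'I_m, val j != 0%N -> z (f j) = c * vp (f j).
Proof.
move=> c_gt0 z_le zu f fu fE; pose cvp := [ffun i => c * vp i].
have le_z (g : {ffun 'I_m -> 'I_n}) j : val j != 0%N -> 0 <= z (g j) <= cvp (g j).
  by rewrite ffunE z_ge0 z_le.
have cvp_gt0 (g : {ffun 'I_m -> 'I_n}) j : val j != 0%N -> 0 < cvp (g j).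
  by rewrite ffunE mulr_gt0 ?perron_gt0.
have tmonomial_cvp (g : {ffun 'I_m -> 'I_n}) : tmonomial cvp g = c ^+ M * tmonomial vp g.
  rewrite /tmonomial (eq_bigr (fun j => c * vp (g j))) => [|j _]; last by rewrite ffunE.
  by rewrite big_split /= prodr_tail_const.
have le_terms (g : {ffun 'I_m -> 'I_n}) :
    0 <= A g * tmonomial cvp g - A g * tmonomial z g.
  by rewrite subr_ge0 ler_wpM2l ?adj_tensor_ge0 // ler_prod // => j; apply: le_z.
have eq_sums : \sum_(g | head_is g u) (A g * tmonomial cvp g - A g * tmonomial z g) = 0.
  apply/eqP; rewrite sumrB subr_eq0 eq_le; apply/andP; split.
    under eq_bigr do rewrite tmonomial_cvp mulrCA.
    by rewrite -mulr_sumr -tapplyE perron_eigen mulrCA -exprMn -zu -tapplyE z_sub.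
  by apply: ler_sum => g _; rewrite -subr_ge0.
move/eqP: (psumr_eq0P (fun g _ => le_terms g) eq_sums fu).
rewrite subr_eq0 adj_tensor_edge // => /eqP eq_terms.
have eq_mono : tmonomial z f = tmonomial cvp f.
  by apply: mulfI (esym eq_terms); rewrite invr_eq0 pnatr_eq0 -lt0n fact_gt0.
move=> j j0; rewrite -[c * _](ffunE (fun i => c * vp i)).
exact: prodr_le_eq (le_z f) (cvp_gt0 f) eq_mono j j0.
Qed.

Lemma subeigen_scaled c u : 0 < c -> (forall i, z i <= c * vp i) -> z u = c * vp u ->
  forall i, z i = c * vp i.
Proof.
move=> c_gt0 z_le zu i; apply/eqP.
apply: (@hconnected_ind _ _ E_connected [pred i | z i == c * vp i] _ u i); last first.
  by rewrite /= zu.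
move=> x y /exists_inP[e eE /andP[xe ye]] /eqP zx /=.
have [f [fx fe]] := edge_enum_from E_uniform eE xe.
move: ye; rewrite -fe => /imsetP[j _ ->].
have [j0 | j0] := eqVneq (val j) 0%N.
  by move/forallP: fx => /(_ j)/implyP/(_ (introT eqP j0))/eqP->; rewrite zx.
by rewrite (subeigen_edge_eq c_gt0 z_le zx fx) ?fe.
Qed.

Lemma subeigen_proportional : z != 0 -> exists2 c, 0 < c & forall i, z i = c * vp i.
Proof.
move=> z_neq0; pose q i := z i / vp i.
have q_ge0 i : 0 <= q i by rewrite divr_ge0 ?z_ge0 ?ltW ?perron_gt0.
have [u _ u_max] := @arg_maxP _ _ _ v0 xpredT (fun i => complex.Re (q i)) isT.
have q_le i : q i <= q u.
  by rewrite lecE !ger0_Im ?q_ge0 // eqxx; apply: u_max.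
have z_le i : z i <= q u * vp i.
  by rewrite -ler_pdivrMr ?perron_gt0 // q_le.
have [j zj_neq0] : exists j, z j != 0.
  apply/existsP; apply: contraR z_neq0 => /existsPn z0.
  by apply/eqP/ffunP=> j; rewrite ffunE; apply/eqP/negPn.
have qu_gt0 : 0 < q u.
  by apply: lt_le_trans (q_le j); rewrite divr_gt0 ?perron_gt0 // lt_def zj_neq0 z_ge0.
exists (q u) => //; apply: (subeigen_scaled qu_gt0 z_le (u := u)).
by rewrite /q divfK // gt_eqF ?perron_gt0.
Qed.

End Subeigenvector.

Lemma perron_first : vp v0 = 1.
Proof. by case: vp_perron => -[_ /(_ v0 v0_first)]. Qed.

Section Eigenvector.
Variable y : {ffun 'I_n -> C}.
Hypothesis y_eig : rho_eigvec_normalized A y.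

Lemma eigvec_eigen i : tapply A y i = rho * y i ^+ M.
Proof. by case: y_eig => -[_ /(_ i)]. Qed.

Let z : {ffun 'I_n -> C} := [ffun j => `|y j|].

Lemma normr_eigvec_sub i : rho * z i ^+ M <= tapply A z i.
Proof.
have -> : rho * z i ^+ M = `|tapply A y i|.
  by rewrite ffunE eigvec_eigen normrM normrX gtr0_norm ?rho_gt0.
rewrite !tapplyE; apply: le_trans (ler_norm_sum _ _ _) (ler_sum _ _) => f _.
rewrite normrM ger0_norm ?adj_tensor_ge0 // normr_prod.
by rewrite (eq_bigr (fun j => z (f j))) // => j _; rewrite ffunE.
Qed.

Lemma normr_eigvec i : `|y i| = vp i.
Proof.
have z_neq0 : z != 0.
  case: y_eig => -[eigvec_neq0 _] _; apply: contra_neq eigvec_neq0 => /ffunP z0.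
  by apply/ffunP=> j; move: (z0 j); rewrite !ffunE => /normr0_eq0.
have z_ge0 j : 0 <= z j by rewrite ffunE.
have [c _ zc] := subeigen_proportional z_ge0 normr_eigvec_sub z_neq0.
have c1 : c = 1.
  move: (zc v0); case: y_eig => _ /(_ v0 v0_first).
  by rewrite ffunE perron_first mulr1 => -> <-; rewrite normr1.
by move: (zc i); rewrite ffunE c1 mul1r.
Qed.

Definition phase : {ffun 'I_n -> C} := [ffun i => y i / `|y i|].

Lemma eigvec_neq0 i : y i != 0.
Proof. by rewrite -normr_gt0 normr_eigvec perron_gt0. Qed.

Lemma phase_neq0 i : phase i != 0.
Proof. by rewrite ffunE mulf_neq0 ?invr_eq0 ?normr_eq0 ?eigvec_neq0. Qed.

Lemma eigvec_phase i : y i = phase i * vp i.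
Proof. by rewrite ffunE -(normr_eigvec i) divfK // normr_eq0 eigvec_neq0. Qed.

(* Since |y| = vp, the terms of (A y^(m-1))_i realize equality in the triangle
   inequality, hence all have the argument of y_i^(m-1). *)
Lemma eigvec_term_aligned i f : head_is f i ->
  A f * tmonomial y f = A f * tmonomial vp f * phase i ^+ M.
Proof.
pose T g := A g * tmonomial y g.
have normT g : `|T g| = A g * tmonomial vp g.
  rewrite normrM ger0_norm ?adj_tensor_ge0 // normr_prod.
  by congr (_ * _); apply: eq_bigr => j _; rewrite normr_eigvec.
have norm_sumT : `|\sum_(g | head_is g i) T g| = \sum_(g | head_is g i) `|T g|.
  rewrite (eq_bigr _ (fun g _ => normT g)) -(tapplyE vp) perron_eigen.
  rewrite -(tapplyE y) eigvec_eigen.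
  by rewrite normrM normrX gtr0_norm ?rho_gt0 // normr_eigvec.
have [t _ T_t] := normC_sum_eq norm_sumT.
have t_phase : t = phase i ^+ M.
  have : \sum_(g | head_is g i) T g = (\sum_(g | head_is g i) `|T g|) * t.
    by rewrite mulr_suml; apply: eq_bigr => g /T_t.
  have rv_neq0 : rho * vp i ^+ M != 0.
    by rewrite mulf_neq0 ?expf_neq0 ?gt_eqF ?rho_gt0 ?perron_gt0.
  rewrite (eq_bigr _ (fun g _ => normT g)) -(tapplyE y) -(tapplyE vp).
  rewrite eigvec_eigen perron_eigen eigvec_phase exprMn mulrCA [RHS]mulrC.
  by move/(mulIf rv_neq0) ->.
by move=> fi; rewrite -t_phase -normT; apply: T_t.
Qed.

Lemma phase_stabilizing : stabilizing_diag A phase.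
Proof.
split; first exact: phase_neq0.
split=> [i i0 | i f fi].
  have -> : i = v0 by apply: val_inj; rewrite /= i0 v0_first.
  by rewrite ffunE; case: y_eig => _ /(_ v0 v0_first) ->; rewrite normr1 divr1.
have [Af0 | Af_neq0] := eqVneq (A f) 0; first by rewrite Af0 mulr0 mul0r.
apply/(eq_conj_scale _ _ Af_neq0 (phase_neq0 i)).
have := eigvec_term_aligned fi.
rewrite /tmonomial (eq_bigr _ (fun j _ => eigvec_phase (f j))).
rewrite big_split /= -mulrA => /(mulfI Af_neq0); rewrite [RHS]mulrC; apply: mulIf.
exact: lt0r_neq0 (tmonomial_perron_gt0 f).
Qed.

End Eigenvector.
End Perron.

(** * The stabilizing index and dimension *)

Section EigenvectorCodes.
Variables (R : realType) (n M : nat) (E : {set {set 'I_n}}) (v0 : 'I_n).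
Variables (w : R[i]) (vp : {ffun 'I_n -> R[i]}).
Local Notation C := R[i].
Local Notation m := M.+2.
Local Notation A := (@adj_tensor C n m E).
Local Notation Q := (@balanced_rows n E 'Z_m v0).
Hypotheses (E_uniform : uniform m E) (E_connected : hconnected E).
Hypotheses (v0_first : val v0 = 0%N) (E_neq0 : (0 < #|E|)%N).
Hypotheses (w_prim : m.-primitive_root w) (vp_perron : is_perron_normalized A vp).

Definition eigvec_of_row (x : 'rV['Z_m]_n) : {ffun 'I_n -> C} :=
  [ffun i => zroot w (x 0 i) * vp i].

Lemma eigvec_of_row_phase x i :
  eigvec_of_row x i / `|eigvec_of_row x i| = zroot w (x 0 i).
Proof.
have vp_gt0 := perron_gt0 vp_perron i.
by rewrite ffunE normrM normr_zroot // mul1r gtr0_norm // mulfK ?gt_eqF.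
Qed.

Lemma eigvec_of_row_inj : injective eigvec_of_row.
Proof.
move=> a b eq_ab; apply/rowP=> i; apply: (zroot_inj w_prim).
by rewrite -!eigvec_of_row_phase eq_ab.
Qed.

Lemma eigvec_of_row0 : eigvec_of_row 0 = vp.
Proof. by apply/ffunP=> i; rewrite ffunE mxE zroot0 mul1r. Qed.

Lemma mod_op_eigvec_of_row a b :
  mod_op vp (eigvec_of_row a) (eigvec_of_row b) = eigvec_of_row (a + b).
Proof.
by apply/ffunP=> i; rewrite ffunE !eigvec_of_row_phase [RHS]ffunE mxE zrootD.
Qed.

Lemma rho_eigvec_normalized_row y : rho_eigvec_normalized A y ->
  exists2 x, x \in Q & y = eigvec_of_row x.
Proof.
move=> y_eig.
have := phase_stabilizing E_uniform E_connected v0_first E_neq0 vp_perron y_eig.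
case/(stabilizing_diag_row E_uniform E_connected v0_first w_prim) => x xQ phase_x.
exists x => //; apply/ffunP=> i.
rewrite (eigvec_phase E_uniform E_connected v0_first E_neq0 vp_perron y_eig) phase_x.
by rewrite !ffunE.
Qed.

End EigenvectorCodes.

Section StabilizingDimension.
Variables (R : realType) (n M : nat) (E : {set {set 'I_n}}) (v0 : 'I_n).
Local Notation m := M.+2.
Local Notation A := (@adj_tensor R[i] n m E).
Local Notation Q := (@balanced_rows n E 'Z_m v0).
Hypotheses (E_uniform : uniform m E) (E_connected : hconnected E).
Hypotheses (v0_first : val v0 = 0%N) (E_neq0 : (0 < #|E|)%N).

Lemma stab_dim_le_balanced (k : int) : (cl #|Q|)%:Z <= k -> stab_dim_le A k.
Proof.
move=> le_k vp vp_perron c t c_sub c_chain; apply: le_trans le_k; rewrite lez_nat.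
have [w w_prim] := prim_root_exists R[i] (ltn0Sn M.+1).
pose code : 'rV['Z_m]_n -> {ffun 'I_n -> R[i]} := eigvec_of_row w vp.
pose H s := [set x : 'rV['Z_m]_n | `[< c s (code x) >]].
have inH s x : (x \in H s) = `[< c s (code x) >] by rewrite inE.
have row_of :=
  rho_eigvec_normalized_row E_uniform E_connected v0_first E_neq0 w_prim vp_perron.
apply: (@proper_chain_leq_cl _ _ H) => [s le_st | | s lt_st].
- have [_ c_vp c_mod] := c_sub s le_st; apply/group_setP; split.
    by rewrite inH; apply/asboolP; rewrite /code eigvec_of_row0.
  move=> x y; rewrite !inH => /asboolP cx /asboolP cy; apply/asboolP.
  rewrite (_ : (x * y)%g = x + y) // /code -(mod_op_eigvec_of_row w_prim vp_perron).
  exact: c_mod.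
- have [c_eig _ _] := c_sub t (leqnn t).
  apply/subsetP=> x; rewrite inH => /asboolP/c_eig x_eig.
  have [x' x'Q code_x] := row_of _ x_eig.
  by rewrite (eigvec_of_row_inj w_prim vp_perron code_x).
- have [c_sub_s [y [y_s1 y_Ns]]] := c_chain s lt_st.
  apply/properP; split.
    by apply/subsetP=> x; rewrite !inH => /asboolP/c_sub_s/asboolP.
  have [c_eig _ _] := c_sub s.+1 lt_st.
  have [x _ y_eq] := row_of _ (c_eig _ y_s1).
  by exists x; rewrite inH /code -y_eq; [apply/asboolP | apply/asboolPn].
Qed.

End StabilizingDimension.

Theorem corollary4p14 (R : realType) (n m : nat) (E : {set {set 'I_n}}) :
  uniform m E -> hconnected E -> (1 < #|E|)%N ->
  let A := @adj_tensor R[i] n m E in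
  let mu := matching_number E in
  stab_index_le A ((m%:R : rat) ^ (n%:Z - mu%:Z - 2)) /\
  stab_dim_le A ((n%:Z - mu%:Z - 2) * (cl m)%:Z).
Proof.
move=> E_uniform E_connected E_gt1.
have m_gt1 := uniform_gt1 E_uniform E_connected E_gt1.
have [M m_eq] : exists M, m = M.+2 by exists m.-2; lia.
subst m => A mu.
have [M0 M0_matching M0_max] := exists_maximum_matching E.
have [f fE fNM0] :=
  exists_edge_notin_matching E_uniform M0_matching E_connected (ltnW m_gt1) E_gt1.
have [v0 v0_first] : exists v0 : 'I_n, val v0 = 0%N.
  have [e eE] : exists e, e \in E by apply/card_gt0P; apply: ltnW.
  have [i _] : exists i, i \in e by apply/card_gt0P; rewrite (card_edge E_uniform eE).
  by exists (Ordinal (leq_ltn_trans (leq0n i) (ltn_ord i))).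
have [D D_card D_rigid] := exists_rigid_set 'Z_M.+2 v0 E_uniform m_gt1 M0_matching fE fNM0.
have Q_dvd := card_balanced_rows_dvdn D_rigid; rewrite card_ord in Q_dvd.
have exponent : n%:Z - mu%:Z - 2 = (n - #|D|)%N.
  have := max_card (mem D); rewrite card_ord D_card M0_max -/mu; lia.
rewrite exponent; split.
  apply: (stab_index_le_balanced R E_uniform E_connected v0_first).
  by rewrite -exprnP -natrX ler_nat dvdn_leq ?expn_gt0.
apply: (stab_dim_le_balanced E_uniform E_connected v0_first (ltnW E_gt1)).
by rewrite -PoszM lez_nat -clX // dvdn_leq_cl ?expn_gt0.
Qed.
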